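(* Every open subset of a UE-space $Y$ is the union of a $\sigma$-boundedly point-finite family of cozero-sets of $Y$.
   Context: ''Space'' means topological $T_0$-space. A zero-set (cozero-set) of $Y$ is $f^{-1}(0)$ (resp. its complement) for continuous $f:Y\to[0,1]$. A U-representation of $V\subseteq Y$ is a sequence $(U_n(V))_{n\in\mathbb{N}}$ with $V=\bigcup_n U_n(V)$, $U_n(V)\subseteq U_{n+1}(V)$, $U_{2n-1}(V)$ a zero-set, $U_{2n}(V)$ a cozero-set. A family $\alpha$ is an almost subbase of $Y$ if U-representations of its members can be chosen so that $\alpha\cup\{Y\setminus U_{2n-1}(V):V\in\alpha,n\in\mathbb{N}\}$ is a subbase of $Y$. A family is boundedly point-finite if there is an integer $n$ such that any $n+2$ of its members have empty intersection; $\sigma$-boundedly point-finite means a countable union of boundedly point-finite families. A UE-space is a space with a $\sigma$-boundedly point-finite almost subbase. *)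

From HB Require Import structures.
From mathcomp Require Import all_boot all_order all_algebra.
From mathcomp Require Import all_classical all_reals all_analysis.
Set Implicit Arguments. Unset Strict Implicit. Unset Printing Implicit Defensive.
Import Order.TTheory GRing.Theory Num.Theory.
Import numFieldNormedType.Exports.
Local Open Scope classical_set_scope.
Local Open Scope ring_scope.

Section UEDefs.
Variables (R : realType) (Y : topologicalType).

Definition zero_set (A : set Y) : Prop :=
  exists f : Y -> R, [/\ continuous f, (forall y, 0 <= f y <= 1)
                       & A = f @^-1` [set 0]].

Definition cozero_set (A : set Y) : Prop := zero_set (~` A).

(* U-representation of V, indexed from 0: U k stands for U_{k+1}.
   So U_{2n-1} (n >= 1) is U (2m) (m = n-1), a zero-set,
   and U_{2n} is U (2m+1), a cozero-set. *)
Definition U_representation (V : set Y) (U : nat -> set Y) : Prop :=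
  [/\ V = \bigcup_k U k,
      (forall k, U k `<=` U k.+1),
      (forall m, zero_set (U (2 * m)%N))
    & (forall m, cozero_set (U (2 * m).+1))].

Definition subbase (S : set (set Y)) : Prop :=
  (forall A, S A -> open A) /\
  (forall (W : set Y) (x : Y), open W -> W x ->
     exists s : seq (set Y),
       [/\ (forall A, A \in s -> S A),
           (forall A, A \in s -> A x)
         & (fun y => forall A, A \in s -> A y) `<=` W]).

Definition almost_subbase (alpha : set (set Y)) : Prop :=
  exists U : set Y -> nat -> set Y,
    (forall V, alpha V -> U_representation V (U V)) /\
    subbase (alpha `|` [set ~` U V (2 * m)%N | V in alpha & m in [set: nat]]).

Definition boundedly_point_finite (beta : set (set Y)) : Prop :=
  exists n : nat, forall f : 'I_(n.+2) -> set Y,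
    injective f -> (forall i, beta (f i)) -> \bigcap_i f i = set0.

Definition sigma_boundedly_point_finite (beta : set (set Y)) : Prop :=
  exists B : nat -> set (set Y),
    beta = \bigcup_k B k /\ forall k, boundedly_point_finite (B k).

Definition UE_space : Prop :=
  kolmogorov_space Y /\
  exists alpha : set (set Y),
    sigma_boundedly_point_finite alpha /\ almost_subbase alpha.

End UEDefs.

(* Let alpha_N be the union of the first N+1 boundedly point-finite pieces of
   the almost subbase, and call two points N-equivalent when they lie in the
   same sets U_V(k), for all V in alpha_N and all k.  For x in W, a subbasic
   neighbourhood of x inside W uses members of some alpha_N and complements of
   zero-sets U_V(2m) with V in alpha_N; replacing the members of alpha_N by the
   cozero-sets U_V(2M+1) for M large gives a cozero-set C between the N-class of
   x and W that is contained in every V in alpha_N meeting the class.  If y lies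
   in such a C, every V in alpha_N through x passes through y, so the class of x
   is determined by finitely many bits: which U_V(k), k <= M, contain x, for the
   boundedly many V in alpha_N through y.  Hence for fixed N and M these covers
   form a boundedly point-finite family. *)

From HB Require Import structures.
From mathcomp Require Import all_boot all_order all_algebra.
From mathcomp Require Import all_classical all_reals all_analysis.
Import Order.TTheory GRing.Theory Num.Theory.
Import numFieldNormedType.Exports.
Set Implicit Arguments.
Unset Strict Implicit.
Unset Printing Implicit Defensive.
Local Open Scope classical_set_scope.

Section ZeroSets.
Variables (R : realType) (Y : topologicalType).

Lemma zero_set0 : zero_set R (@set0 Y).
Proof.
exists (fun _ => 1%R); split; first exact: cst_continuous.
- by move=> _; rewrite ler01 lexx.
- by apply/seteqP; split => // y /= /eqP; rewrite oner_eq0.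
Qed.

Lemma zero_setU (A B : set Y) :
  zero_set R A -> zero_set R B -> zero_set R (A `|` B).
Proof.
move=> [f [fc f01 ->]] [g [gc g01 ->]].
exists (fun y => f y * g y)%R; split.
- by move=> y; apply: continuousM; [exact: fc | exact: gc].
- by move=> y; have /andP[f0 f1] := f01 y; have /andP[g0 g1] := g01 y;
    rewrite mulr_ge0 //= mulr_ile1.
- apply/seteqP; split => y /=.
    by case=> ->; rewrite ?mul0r ?mulr0.
  by move/eqP; rewrite mulf_eq0 => /orP[]/eqP; [left|right].
Qed.

Lemma cozero_setT : cozero_set R (@setT Y).
Proof. by rewrite /cozero_set setCT; exact: zero_set0. Qed.

Lemma cozero_setI (A B : set Y) :
  cozero_set R A -> cozero_set R B -> cozero_set R (A `&` B).
Proof. by rewrite /cozero_set setCI; exact: zero_setU. Qed.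

Lemma cozero_set_bigcap (s : seq (set Y)) :
  (forall A, A \in s -> cozero_set R A) ->
  cozero_set R [set y | forall A, A \in s -> A y].
Proof.
elim: s => [_|A s IHs cs].
  suff -> : [set y : Y | forall A : set Y, A \in [::] -> A y] = setT.
    exact: cozero_setT.
  by apply/seteqP; split.
have -> : [set y | forall B, B \in A :: s -> B y] =
          A `&` [set y | forall B, B \in s -> B y].
  apply/seteqP; split=> y /=; first by move=> sy; split=> [|B Bs];
    apply: sy; rewrite inE ?eqxx ?Bs ?orbT.
  by case=> Ay sy B; rewrite inE => /orP[/eqP->|/sy].
apply: cozero_setI; first by apply: cs; rewrite mem_head.
by apply: IHs => B Bs; apply: cs; rewrite inE Bs orbT.
Qed.

Lemma cozero_setC (A : set Y) : zero_set R A -> cozero_set R (~` A).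
Proof. by rewrite /cozero_set setCK. Qed.

End ZeroSets.

Lemma seq_of_no_injection (T : eqType) n (S : set T) :
  (forall f : 'I_n.+1 -> T, injective f -> (forall i, S (f i)) -> False) ->
  exists s : seq T, (size s <= n)%N /\ forall x, x \in s <-> S x.
Proof.
elim: n S => [|n IHn] S noinj.
  exists [::]; split => // x; split => // Sx.
  by case: (noinj (fun=> x)) => // i j _; rewrite !ord1.
have [[x Sx]|S0] := pselect (exists x, S x); last first.
  by exists [::]; split => // x; split => // Sx; case: S0; exists x.
have [|s [size_s sP]] := IHn (S `\ x).
  move=> f finj fS; pose g i := if unlift ord0 i is Some j then f j else x.
  apply: (noinj g) => [i j|i]; rewrite /g.
    case: unliftP => [i' ->|->]; case: unliftP => [j' ->|->] //.
    - by move/finj->.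
    - by move=> fx; case: (fS i') => _ [].
    - by move=> xf; case: (fS j') => _ [].
  by case: unliftP => [i' _|_ //]; case: (fS i').
exists (x :: s); split => // z; rewrite in_cons; split.
  by case/orP => [/eqP->|/sP[]].
have [->|zx Sz] := eqVneq z x; first by [].
by apply/orP; right; apply/sP; split => // /eqP; rewrite (negPf zx).
Qed.

Section BoundedlyPointFinite.
Variable Y : topologicalType.
Implicit Types (beta : set (set Y)).

Definition point_enumerable n beta := forall y, exists s : seq (set Y),
  (size s <= n)%N /\ forall A, A \in s <-> beta A /\ A y.

Lemma bpf_point_enumerable beta :
  boundedly_point_finite beta -> exists n, point_enumerable n beta.
Proof.
move=> [n bpf]; exists n.+1 => y.
apply: seq_of_no_injection => f finj fS.
have /seteqP[+ _] := bpf f finj (fun i => (fS i).1).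
by apply => i _; exact: (fS i).2.
Qed.

Lemma point_enumerableU n m beta gamma :
  point_enumerable n beta -> point_enumerable m gamma ->
  point_enumerable (n + m) (beta `|` gamma).
Proof.
move=> eb eg y; have [s [size_s sP]] := eb y; have [t [size_t tP]] := eg y.
exists (s ++ t); split; first by rewrite size_cat leq_add.
move=> A; rewrite mem_cat; split.
  by case/orP => [/sP|/tP] [? ?]; split => //; [left|right].
by case=> [[bA|gA] Ay]; apply/orP; [left; apply/sP|right; apply/tP].
Qed.

Lemma bpf_image_coded (X : Type) (T : finType) (D : set X) (g : X -> set Y) :
  (forall y, exists code : X -> T, forall x1 x2, D x1 -> D x2 ->
     g x1 y -> g x2 y -> code x1 = code x2 -> g x1 = g x2) ->
  boundedly_point_finite [set g x | x in D].
Proof.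
move=> coded; exists #|T| => f finj fD; apply/seteqP; split => // y fy.
have [code codeP] := coded y.
pose x i := s2val (cid2 (fD i)).
have Dx i : D (x i) by rewrite /x; case: cid2.
have gx i : g (x i) = f i by rewrite /x; case: cid2.
have : injective (code \o x).
  move=> i j /= eq_code; apply: finj; rewrite -!gx.
  by apply: codeP (Dx i) (Dx j) _ _ eq_code; rewrite gx; exact: fy.
by move/leq_card; rewrite card_ord ltnNge leqnSn.
Qed.

Lemma sigma_bpf_bigcup2 (F : nat -> nat -> set (set Y)) :
  (forall N M, boundedly_point_finite (F N M)) ->
  sigma_boundedly_point_finite (\bigcup_N \bigcup_M F N M).
Proof.
move=> bpfF.
exists (fun k => if unpickle k is Some (N, M) then F N M else set0); split.
  apply/seteqP; split => [A [N _ [M _ FA]]|A [k _]].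
    by exists (pickle (N, M)) => //; rewrite pickleK.
  by case: unpickle => [[N M] FA|//]; exists N => //; exists M.
move=> k; case: unpickle => [[N M]|]; first exact: bpfF.
by exists 0%N => f _ /(_ ord0).
Qed.

End BoundedlyPointFinite.

Lemma seq_common_level (T : eqType) (s : seq T) (P : T -> nat -> Prop) :
  (forall a, a \in s -> exists k, forall l, (k <= l)%N -> P a l) ->
  exists k, forall l, (k <= l)%N -> forall a, a \in s -> P a l.
Proof.
elim: s => [_|a s IHs levels]; first by exists 0%N.
have [k Pk] := levels a (mem_head a s).
have [m Pm] := IHs (fun b bs => levels b (mem_behead (s := a :: s) bs)).
exists (maxn k m) => l; rewrite geq_max => /andP[kl ml] b.
by rewrite in_cons => /orP[/eqP->|bs]; [exact: Pk | exact: Pm].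
Qed.

Section URepresentation.
Variables (R : realType) (Y : topologicalType) (V : set Y) (U : nat -> set Y).
Hypothesis Urep : U_representation R V U.

Lemma U_representation_sub k : U k `<=` V.
Proof. by case: Urep => -> _ _ _ y Uy; exists k. Qed.

Lemma U_representation_mono k l : (k <= l)%N -> U k `<=` U l.
Proof.
case: Urep => _ Uincr _ _ /subnK <-; elim: (l - k)%N => [//|d IHd] y /IHd.
by rewrite addSn; apply: Uincr.
Qed.

Lemma U_representation_cover y : V y -> exists k, U k y.
Proof. by case: Urep => -> _ _ _ [k _ Uy]; exists k. Qed.

End URepresentation.

Section CozeroCovers.
Variables (R : realType) (Y : topologicalType) (W : set Y).
Variables (alpha : set (set Y)) (B : nat -> set (set Y)) (U : set Y -> nat -> set Y).
Hypothesis alpha_bigcup : alpha = \bigcup_k B k.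
Hypothesis bpfB : forall k, boundedly_point_finite (B k).
Hypothesis Urep : forall V, alpha V -> U_representation R V (U V).
Hypothesis subbase_alpha :
  subbase (alpha `|` [set ~` U V (2 * m)%N | V in alpha & m in [set: nat]]).
Hypothesis openW : open W.

Fixpoint alpha_upto N : set (set Y) :=
  if N is N'.+1 then alpha_upto N' `|` B N else B 0.

Definition subbase_upto N : set (set Y) :=
  alpha_upto N `|` [set ~` U V (2 * m)%N | V in alpha_upto N & m in [set: nat]].

Lemma alpha_upto_sub N : alpha_upto N `<=` alpha.
Proof.
rewrite alpha_bigcup; elim: N => [V B0|N IHN V [/IHN//|BV]]; first by exists 0%N.
by exists N.+1.
Qed.

Lemma alpha_upto_mono N N' : (N <= N')%N -> alpha_upto N `<=` alpha_upto N'.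
Proof. by move=> /subnK <-; elim: (N' - N)%N => [//|d IHd] V /IHd; left. Qed.

Lemma alpha_upto_enumerable N : exists n, point_enumerable n (alpha_upto N).
Proof.
have [n0 en0] := bpf_point_enumerable (bpfB 0).
elim: N => [|N [n en]]; first by exists n0.
have [m em] := bpf_point_enumerable (bpfB N.+1).
by exists (n + m)%N; exact: point_enumerableU.
Qed.

Lemma subbase_upto_mono N N' : (N <= N')%N -> subbase_upto N `<=` subbase_upto N'.
Proof.
move=> NN' A [aA|[V aV [m _ <-]]]; first by left; exact: alpha_upto_mono aA.
by right; exists V; [exact: alpha_upto_mono aV | exists m].
Qed.

Lemma seq_subbase_upto (s : seq (set Y)) :
  (forall A, A \in s ->
     (alpha `|` [set ~` U V (2 * m)%N | V in alpha & m in [set: nat]]) A) ->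
  exists N, forall A, A \in s -> subbase_upto N A.
Proof.
have alpha_upto_ex V : alpha V -> exists N, alpha_upto N V.
  rewrite alpha_bigcup => -[N _ BV]; exists N.
  by case: N BV => [//|N BV]; right.
move=> sA; have [N /(_ N (leqnn N)) upN] : exists N, forall N', (N <= N')%N ->
    forall A, A \in s -> subbase_upto N' A.
  apply: seq_common_level => A /sA [/alpha_upto_ex [N aA]|[V /alpha_upto_ex [N aV] mA]].
    by exists N => N' NN'; apply: subbase_upto_mono NN' _ _; left.
  by exists N => N' NN'; apply: subbase_upto_mono NN' _ _; right; exists V.
by exists N.
Qed.

Definition same_trace N (z x : Y) :=
  forall V, alpha_upto N V -> forall k, U V k z <-> U V k x.

Definition trace_class N x := [set z | same_trace N z x].

Lemma trace_class_self N x : trace_class N x x.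
Proof. by move=> V _ k. Qed.

Definition level N M x := forall V, alpha_upto N V -> V x -> U V M x.

Lemma level_exists N x : exists M, level N M x.
Proof.
have [n en] := alpha_upto_enumerable N; have [t [_ tP]] := en x.
have [M levM] : exists M, forall l, (M <= l)%N -> forall V, V \in t -> U V l x.
  apply: seq_common_level => V /tP[/alpha_upto_sub aV Vx].
  have [k Ukx] := U_representation_cover (Urep aV) Vx.
  by exists k => l kl; exact: (U_representation_mono (Urep aV) kl Ukx).
by exists M => V aV Vx; apply: levM => //; apply/tP.
Qed.

Lemma trace_class_eq N x1 x2 :
  same_trace N x1 x2 -> trace_class N x1 = trace_class N x2.
Proof.
move=> x12; apply/seteqP; split => z zx V aV k.
- exact: iff_trans (zx V aV k) (x12 V aV k).
- exact: iff_trans (zx V aV k) (iff_sym (x12 V aV k)).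
Qed.

Lemma same_trace_mem N z x V : same_trace N z x -> alpha_upto N V -> V z -> V x.
Proof.
move=> zx aV Vz; have aV' := alpha_upto_sub aV.
have [k /(zx V aV k)] := U_representation_cover (Urep aV') Vz.
exact: U_representation_sub (Urep aV') k x.
Qed.

Lemma same_trace_of_levels N M x1 x2 : level N M x1 -> level N M x2 ->
  (forall V k, alpha_upto N V -> V x1 \/ V x2 -> (k <= M)%N ->
     U V k x1 <-> U V k x2) ->
  same_trace N x1 x2.
Proof.
move=> lev1 lev2 low V aV k; have aV' := alpha_upto_sub aV.
have Usub := U_representation_sub (Urep aV').
have Umono := U_representation_mono (Urep aV').
have [kM|Mk] := leqP k M.
  by split=> Uk; apply/(low V k) => //; [left|right]; exact: Usub Uk.
split=> Uk.
- have Vx1 := Usub _ _ Uk; apply: Umono (ltnW Mk) _ _.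
  by apply/(low V M) => //; [left | exact: lev1].
- have Vx2 := Usub _ _ Uk; apply: Umono (ltnW Mk) _ _.
  by apply/(low V M) => //; [right | exact: lev2].
Qed.

Definition admissible N M x := [/\ W x, level N M x & exists s : seq (set Y),
  [/\ forall A, A \in s -> subbase_upto N A, forall A, A \in s -> A x
    & [set y | forall A, A \in s -> A y] `<=` W]].

Lemma admissible_exists x : W x -> exists N M, admissible N M x.
Proof.
move=> Wx; have [s [sA sx sW]] := subbase_alpha.2 W x openW Wx.
have [N sN] := seq_subbase_upto sA; have [M levM] := level_exists N x.
by exists N, M; split => //; exists s.
Qed.

Definition cover_of N (E C : set Y) := [/\ cozero_set R C, C `<=` W, E `<=` C
  & forall V z, alpha_upto N V -> E z -> V z -> C `<=` V].

Lemma cover_exists N M x : admissible N M x -> exists C, cover_of N (trace_class N x) C.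
Proof.
move=> [Wx levM [s [sN sx sW]]].
have [n en] := alpha_upto_enumerable N; have [t [_ tP]] := en x.
(* Members of s that lie in alpha_upto N are traded for the smaller cozero-sets
   U V (2M+1); the remaining members are complements of zero-sets. *)
pose c := [seq U V (2 * M).+1 | V <- t] ++ [seq A <- s | ~~ `[< alpha_upto N A >]].
have c_t V : V \in t -> U V (2 * M).+1 \in c by move=> Vt; rewrite mem_cat map_f.
have c_s A : A \in s -> ~ alpha_upto N A -> A \in c.
  by move=> As nA; rewrite mem_cat mem_filter As asboolF ?orbT.
have c_cases A : A \in c -> (exists2 V, V \in t & A = U V (2 * M).+1) \/
    exists2 V, alpha_upto N V & exists m, A = ~` U V (2 * m)%N /\ A x.
  rewrite mem_cat mem_filter => /orP[/mapP[V Vt ->]|/andP[/asboolPn nA As]].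
    by left; exists V.
  have [//|[V aV [m _ AE]]] := sN A As.
  by right; exists V => //; exists m; split; [rewrite AE | exact: sx].
have C_sub V : V \in t -> [set y | forall A, A \in c -> A y] `<=` V.
  move=> /[dup] Vt /tP[/alpha_upto_sub aV _] y /(_ _ (c_t V Vt)).
  exact: U_representation_sub (Urep aV) _ y.
exists [set y | forall A, A \in c -> A y]; split.
- apply: cozero_set_bigcap => A /c_cases[[V /tP[/alpha_upto_sub aV _] ->]|].
    by case: (Urep aV).
  by move=> [V /alpha_upto_sub aV [m [-> _]]]; apply: cozero_setC; case: (Urep aV).
- move=> y Cy; apply: sW => A As.
  have [aA|nA] := pselect (alpha_upto N A); last exact: Cy (c_s A As nA).
  by apply: C_sub y Cy; apply/tP; split => //; exact: sx.
- move=> z zx A /c_cases[[V /tP[aV Vx] ->]|[V aV [m [-> nUx]]]].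
    have M_le : (M <= (2 * M).+1)%N by rewrite ltnW // ltnS mul2n -addnn leq_addr.
    apply/(zx V aV).
    exact: (U_representation_mono (Urep (alpha_upto_sub aV)) M_le (levM V aV Vx)).
  by move/(zx V aV).
- move=> V z aV zx Vz; apply: C_sub; apply/tP; split => //.
  exact: same_trace_mem zx aV Vz.
Qed.

Definition cover N E := get (cover_of N E).

Lemma coverP N M x : admissible N M x ->
  cover_of N (trace_class N x) (cover N (trace_class N x)).
Proof. by move=> gx; apply: getPex; exact: cover_exists gx. Qed.

Definition covers N M := [set cover N (trace_class N x) | x in admissible N M].

Lemma covers_bpf N M : boundedly_point_finite (covers N M).
Proof.
have [n en] := alpha_upto_enumerable N.
apply: (bpf_image_coded (T := {ffun 'I_n -> {ffun 'I_M.+1 -> bool}})) => y.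
have [t [size_t tP]] := en y.
(* Indices past size t read the junk set nth set0 t i, which is harmless. *)
exists (fun x => [ffun i : 'I_n => [ffun k : 'I_M.+1 => `[< U (nth set0 t i) k x >]]]).
move=> x1 x2 gx1 gx2 Cx1y Cx2y eq_code; congr cover; apply: trace_class_eq.
have in_t x V : admissible N M x -> cover N (trace_class N x) y ->
    alpha_upto N V -> V x -> V \in t.
  move=> gx Cy aV Vx; apply/tP; split => //.
  by have [_ _ _ subV] := coverP gx; apply: (subV V x aV (@trace_class_self N x) Vx).
apply: (@same_trace_of_levels _ M); [by case: gx1 | by case: gx2 |].
move=> V k aV Vx12 kM.
have Vt : V \in t by case: Vx12; [exact: in_t gx1 Cx1y aV | exact: in_t gx2 Cx2y aV].
have Vn : (index V t < n)%N by apply: leq_trans size_t; rewrite index_mem.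
have kM1 : (k < M.+1)%N by [].
move/(congr1 (fun c : {ffun 'I_n -> {ffun 'I_M.+1 -> bool}} =>
  c (Ordinal Vn) (Ordinal kM1))): eq_code.
by rewrite !ffunE /= nth_index //; exact: asbool_eq_equiv.
Qed.

Lemma open_bigcup_cozero : exists beta : set (set Y),
  [/\ sigma_boundedly_point_finite beta, (forall A, beta A -> cozero_set R A)
    & W = \bigcup_(A in beta) A].
Proof.
exists (\bigcup_N \bigcup_M covers N M); split.
- exact: sigma_bpf_bigcup2 covers_bpf.
- by move=> A [N _ [M _ [x gx <-]]]; case: (coverP gx).
- apply/seteqP; split => [x Wx|y [A [N _ [M _ [x gx <-]]]]].
    have [N [M gx]] := admissible_exists Wx.
    exists (cover N (trace_class N x)); first by exists N => //; exists M => //; exists x.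
    by case: (coverP gx) => _ _ + _; apply; exact: trace_class_self.
  by case: (coverP gx) => _ + _ _; apply.
Qed.

End CozeroCovers.

Theorem proposition5p10 (R : realType) (Y : topologicalType) :
  UE_space R Y ->
  forall W : set Y, open W ->
    exists beta : set (set Y),
      [/\ sigma_boundedly_point_finite beta,
          (forall A, beta A -> cozero_set R A)
        & W = \bigcup_(A in beta) A].
Proof.
move=> [_ [alpha [[B [alpha_bigcup bpfB]] [U [Urep subbase_alpha]]]]] W openW.
exact: open_bigcup_cozero alpha_bigcup bpfB Urep subbase_alpha openW.
Qed.
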